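(* Let $C$ be a bialgebra over a commutative ring $\Bbbk$, with product $\mu$, unit $1_C$, coproduct $\Delta$ (iterated coproduct written $\Delta^{n-1}(c)=c^{(1)}\otimes\dots\otimes c^{(n)}$) and counit $\varepsilon$. Let $\mathcal{O}_C$ be the operad with multiplication with $\mathcal{O}_C(n)=C^{\otimes n}$, identity $1_C\in\mathcal{O}_C(1)$, partial compositions $$(a_1\otimes\dots\otimes a_m)\circ_i(b_1\otimes\dots\otimes b_n)=a_1\otimes\dots\otimes a_{i-1}\otimes a_i^{(1)}b_1\otimes\dots\otimes a_i^{(n)}b_n\otimes a_{i+1}\otimes\dots\otimes a_m,$$ multiplication $1_C\otimes 1_C\in\mathcal{O}_C(2)$ and $e=1\in\Bbbk=\mathcal{O}_C(0)$; its cochain complex is the cobar construction $\Omega C$ and its cohomology is $\mathrm{Cotor}^*_C(\Bbbk,\Bbbk)$, which thus carries a Gerstenhaber algebra structure. Let $\mathcal{C}o\mathcal{E}nd(C)$ be the operad with multiplication $\mathcal{C}o\mathcal{E}nd(C)(n)=\mathrm{Hom}_\Bbbk(C,C^{\otimes n})$, $\gamma(f;g_1,\dots,g_n)=(g_1\otimes\dots\otimes g_n)\circ f$, identity $\mathrm{id}_C$, multiplication $\Delta$ and $e=\varepsilon$; its cochain complex is the Hochschild cochain complex $\mathcal{C}^*_{coalg}(C,C)$ of the coalgebra $C$, whose cohomology $HH^*_{coalg}(C,C)$ is thus a Gerstenhaber algebra. Then the linear maps $ext:C^{\otimes n}\to\mathrm{Hom}_\Bbbk(C,C^{\otimes n})$,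 $ext(c_1\otimes\dots\otimes c_n)(c)=c^{(1)}c_1\otimes\dots\otimes c^{(n)}c_n$, induce an injective morphism of Gerstenhaber algebras $\mathrm{Cotor}^*_C(\Bbbk,\Bbbk)\hookrightarrow HH^*_{coalg}(C,C)$; i.e. $\mathrm{Cotor}^*_C(\Bbbk,\Bbbk)$ is a sub Gerstenhaber algebra of $HH^*_{coalg}(C,C)$.
   Context: A (non-symmetric, $\Bbbk$-linear) operad $O$ consists of $\Bbbk$-modules $O(n)$, $n\ge 0$, an identity $id\in O(1)$ and associative unital structure maps, equivalently partial compositions $\circ_i:O(m)\otimes O(n)\to O(m+n-1)$, $1\le i\le m$. An operad with multiplication is an operad with $\mu\in O(2)$, $e\in O(0)$ such that $\mu\circ_1\mu=\mu\circ_2\mu$ and $\mu\circ_1e=id=\mu\circ_2 e$. Its cochain complex $\mathcal{C}^*(O)$ has $O(n)$ in degree $n$ and differential $df=\mu\circ_2 f+\sum_{i=1}^n(-1)^if\circ_i\mu+(-1)^{n+1}\mu\circ_1 f$. The cup product $f\cup g=(\mu\circ_1 f)\circ_{m+1}g$ for $f\in O(m)$, $g\in O(n)$, and the bracket $\{f,g\}=f\bar\circ g-(-1)^{(m-1)(n-1)}g\bar\circ f$ with $f\bar\circ g=(-1)^{(m-1)(n-1)}\sum_{i=1}^m(-1)^{(n-1)(i-1)}f\circ_i g$, induce on the cohomology $H(\mathcal{C}^*(O))$ a Gerstenhaber algebra structure (graded commutative product plus degree $-1$ Lie bracket satisfying the Poisson rule). Morphisms of operads with multiplication induce morphisms of Gerstenhaber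 algebras. *)

From HB Require Import structures.
From mathcomp Require Import all_boot all_order all_algebra.
Set Implicit Arguments. Unset Strict Implicit. Unset Printing Implicit Defensive.
Import Order.TTheory GRing.Theory Num.Theory.
Local Open Scope ring_scope.

(* A (representative of an) element of C^{(x)n} is a formal finite sum
   sum_j r_j (c_j1 (x) ... (x) c_jn), encoded as a list of pairs
   (r_j, [:: c_j1; ...; c_jn]).  Two representatives denote the same
   element of C^{(x)n} iff every n-multilinear map C^n -> M (M any R-module)
   takes the same value on them (universal property of the tensor power).
   For n = 0 this gives C^{(x)0} = R.                                        *)

Definition tens (R : comPzRingType) (C : lmodType R) := seq (R * seq C).

Definition multilinear (R : comPzRingType) (C : lmodType R) (M : lmodType R)
  (n : nat) (phi : seq C -> M) : Prop :=
  forall (s : seq C) (i : nat) (a : R) (u v : C), size s = n -> (i < n)%N ->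
    phi (set_nth 0 s i (a *: u + v)) =
    a *: phi (set_nth 0 s i u) + phi (set_nth 0 s i v).

Definition teval (R : comPzRingType) (C : lmodType R) (M : lmodType R)
  (phi : seq C -> M) (x : tens C) : M :=
  \sum_(p <- x) p.1 *: phi p.2.

Definition twf (R : comPzRingType) (C : lmodType R) (n : nat) (x : tens C) : bool :=
  all (fun p => size p.2 == n) x.

Definition teq (R : comPzRingType) (C : lmodType R) (n : nat) (x y : tens C) : Prop :=
  forall (M : lmodType R) (phi : seq C -> M),
    multilinear n phi -> teval phi x = teval phi y.

Definition tneg (R : comPzRingType) (C : lmodType R) (x : tens C) : tens C :=
  [seq (- p.1, p.2) | p <- x].

(* Hom_R(C, C^{(x)n}): functions C -> tens C, valued in degree n, linear
   modulo equality in C^{(x)n}; two of them are equal when pointwise equal. *)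

Definition thom (R : comPzRingType) (C : lmodType R) (n : nat) (f : C -> tens C) : Prop :=
  (forall c, twf n (f c)) /\
  (forall (a : R) (u v : C),
     teq n (f (a *: u + v)) ([seq (a * p.1, p.2) | p <- f u] ++ f v)).

Definition heq (R : comPzRingType) (C : lmodType R) (n : nat) (f g : C -> tens C) : Prop :=
  forall c, teq n (f c) (g c).

(* An "opdata" packages the additive structure on the cochains, the partial
   compositions  circ i f g = f o_i g  (i is 1-based), and mu in O(2).       *)

Record opdata (X : Type) := OpData {
  oadd : X -> X -> X;
  oneg : X -> X;
  ozero : X;
  ocirc : nat -> X -> X -> X;
  omu : X }.

Section Generic.
Variables (X : Type) (O : opdata X).

Definition osgn (b : bool) (x : X) : X := if b then oneg O x else x.

Definition osum (F : nat -> X) (s : seq nat) : X :=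
  foldr (fun i acc => oadd O (F i) acc) (ozero O) s.

Definition odiff (n : nat) (f : X) : X :=
  oadd O (ocirc O 2 (omu O) f)
    (oadd O (osum (fun i => osgn (odd i) (ocirc O i f (omu O))) (iota 1 n))
            (osgn (odd n.+1) (ocirc O 1 (omu O) f))).

Definition ocup (m : nat) (f g : X) : X :=
  ocirc O m.+1 (ocirc O 1 (omu O) f) g.

(* The signs (-1)^{(m-1)(n-1)} and (-1)^{(n-1)(i-1)} are taken with integer
   exponents: the parity of (m-1)(n-1) is (~~ odd m) && (~~ odd n).          *)
Definition obar (m n : nat) (f g : X) : X :=
  osgn (~~ odd m && ~~ odd n)
    (osum (fun i => osgn (~~ odd n && odd i.-1) (ocirc O i f g)) (iota 1 m)).

Definition obracket (m n : nat) (f g : X) : X :=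
  oadd O (obar m n f g) (oneg O (osgn (~~ odd m && ~~ odd n) (obar n m g f))).

End Generic.

(* Iterated coproduct  Delta^{n-1}(c) = c^(1) (x) ... (x) c^(n), with the
   conventions Delta^{-1} = epsilon and Delta^0 = id.                       *)

Fixpoint deltaS (R : comPzRingType) (C : lmodType R) (Delta : C -> tens C)
    (n : nat) (c : C) : tens C :=
  match n with
  | 0 => [:: (1, [:: c])]
  | n'.+1 => flatten [seq [seq (p.1 * q.1, nth 0 p.2 0 :: q.2)
                          | q <- deltaS Delta n' (nth 0 p.2 1)] | p <- Delta c]
  end.

Definition deltan (R : comPzRingType) (C : lmodType R) (Delta : C -> tens C)
    (eps : C -> R) (n : nat) (c : C) : tens C :=
  match n with
  | 0 => [:: (eps c, [::])]
  | n'.+1 => deltaS Delta n' c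
  end.

Definition wmul (R : comPzRingType) (C : algType R) (s t : seq C) : seq C :=
  [seq p.1 * p.2 | p <- zip s t].

(* The operad O_C, O_C(n) = C^{(x)n}:
   (a_1..a_m) o_i (b_1..b_n) = a_1..a_{i-1} (a_i^(1) b_1) .. (a_i^(n) b_n) a_{i+1}..a_m
   (the arity n of the second argument is read off from its words). *)

Definition OC_circ (R : comPzRingType) (C : algType R) (Delta : C -> tens C)
    (eps : C -> R) (i : nat) (x y : tens C) : tens C :=
  flatten [seq flatten [seq
      [seq (p.1 * q.1 * t.1,
            take i.-1 p.2 ++ wmul t.2 q.2 ++ drop i p.2)
      | t <- deltan Delta eps (size q.2) (nth 0 p.2 i.-1)]
    | q <- y] | p <- x].

Definition OC_op (R : comPzRingType) (C : algType R) (Delta : C -> tens C)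
    (eps : C -> R) : opdata (tens C) :=
  @OpData _ (fun x y => x ++ y) (@tneg R C) [::] (OC_circ Delta eps)
    [:: (1, [:: 1; 1])].

Definition OC_e (R : comPzRingType) (C : algType R) : tens C := [:: (1, [::])].

Definition CE_circ (R : comPzRingType) (C : algType R) (i : nat)
    (f g : C -> tens C) : C -> tens C :=
  fun c => flatten [seq [seq (p.1 * q.1, take i.-1 p.2 ++ q.2 ++ drop i p.2)
                        | q <- g (nth 0 p.2 i.-1)] | p <- f c].

Definition CE_op (R : comPzRingType) (C : algType R) (Delta : C -> tens C)
    : opdata (C -> tens C) :=
  @OpData _ (fun f g c => f c ++ g c) (fun f c => tneg (f c)) (fun _ => [::])
    (@CE_circ R C) Delta.

Definition CE_e (R : comPzRingType) (C : algType R) (eps : C -> R) : C -> tens C :=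
  fun c => [:: (eps c, [::])].

Definition CE_id (R : comPzRingType) (C : algType R) : C -> tens C :=
  fun c => [:: (1, [:: c])].

Definition is_bialgebra (R : comPzRingType) (C : algType R)
    (Delta : C -> tens C) (eps : C -> R) : Prop :=
  [/\ thom 2 Delta /\
      (forall (a : R) (u v : C), eps (a *: u + v) = a * eps u + eps v),
      heq 3 (CE_circ 1 Delta Delta) (CE_circ 2 Delta Delta),
      (heq 1 (CE_circ 1 Delta (CE_e eps)) (@CE_id R C) /\
       heq 1 (CE_circ 2 Delta (CE_e eps)) (@CE_id R C)),
      ((forall a b : C, teq 2 (Delta (a * b))
          [seq (p.1 * q.1, wmul p.2 q.2) | p <- Delta a, q <- Delta b]) /\
       teq 2 (Delta 1) [:: (1, [:: 1; 1])]) &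
      ((forall a b : C, eps (a * b) = eps a * eps b) /\ eps 1 = 1)].

Definition ext (R : comPzRingType) (C : algType R) (Delta : C -> tens C)
    (eps : C -> R) (n : nat) (x : tens C) : C -> tens C :=
  fun c => flatten [seq [seq (p.1 * q.1, wmul q.2 p.2)
                        | q <- deltan Delta eps n c] | p <- x].

Definition OC_cobound (R : comPzRingType) (C : algType R) (Delta : C -> tens C)
    (eps : C -> R) (n : nat) (z : tens C) : Prop :=
  match n with
  | 0 => teq 0 z [::]
  | n'.+1 => exists y, twf n' y /\ teq n z (odiff (OC_op Delta eps) n' y)
  end.

Definition CE_cobound (R : comPzRingType) (C : algType R) (Delta : C -> tens C)
    (n : nat) (z : C -> tens C) : Prop :=
  match n with
  | 0 => heq 0 z (fun _ => [::])
  | n'.+1 => exists g, thom n' g /\ heq n z (odiff (CE_op Delta) n' g)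
  end.

Definition OC_cocycle (R : comPzRingType) (C : algType R) (Delta : C -> tens C)
    (eps : C -> R) (n : nat) (x : tens C) : Prop :=
  twf n x /\ teq n.+1 (odiff (OC_op Delta eps) n x) [::].

Definition CE_cocycle (R : comPzRingType) (C : algType R) (Delta : C -> tens C)
    (n : nat) (f : C -> tens C) : Prop :=
  thom n f /\ heq n.+1 (odiff (CE_op Delta) n f) (fun _ => [::]).

(* ext is a morphism of operads with multiplication O_C -> CoEnd(C).  It
   commutes with the partial compositions because, by coassociativity,
   Delta^(m+n-1) = (id^(i-1) (x) Delta^(n) (x) id^(m-i)) Delta^(m), and because
   the iterated coproduct Delta^(n) is multiplicative; it sends 1_C (x) 1_C to
   Delta and 1 to eps.  Hence it commutes with the differentials, cup products
   and brackets on cochains, and induces a morphism of Gerstenhaber algebras.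
   It is injective in cohomology because f |-> f(1_C) is a left inverse
   (Delta^(n)(1_C) = 1_C (x) ... (x) 1_C) that also commutes with the
   differentials. *)

From HB Require Import structures.
From mathcomp Require Import all_boot all_order all_algebra.
From mathcomp Require Import zify.
Import Order.TTheory GRing.Theory Num.Theory.
Local Open Scope ring_scope.
Set Implicit Arguments. Unset Strict Implicit. Unset Printing Implicit Defensive.

Section SetNth.
Variables (T : Type) (x0 : T).
Implicit Types (s : seq T) (e : T).

Lemma size_set_nth_lt s i e : (i < size s)%N -> size (set_nth x0 s i e) = size s.
Proof. by move=> lt_i; rewrite size_set_nth; apply/maxn_idPr. Qed.

Lemma set_nth_catl s1 s2 j e : (j < size s1)%N ->
  set_nth x0 (s1 ++ s2) j e = set_nth x0 s1 j e ++ s2.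
Proof. by elim: s1 j => [|a s1 IH] [|j] //= lt_j; rewrite IH. Qed.

Lemma set_nth_catr s1 s2 j e :
  set_nth x0 (s1 ++ s2) (size s1 + j) e = s1 ++ set_nth x0 s2 j e.
Proof. by elim: s1 => [|a s1 IH] //=; rewrite IH. Qed.

Lemma take_set_nth_lt s i j e : (j < i)%N -> (j < size s)%N ->
  take i (set_nth x0 s j e) = set_nth x0 (take i s) j e.
Proof. by elim: s i j => [|a s IH] [|i] [|j] //= lt_ji lt_j; rewrite IH. Qed.

Lemma take_set_nth_ge s i j e : (i <= j)%N -> (j < size s)%N ->
  take i (set_nth x0 s j e) = take i s.
Proof. by elim: s i j => [|a s IH] [|i] [|j] //= le_ij lt_j; rewrite ?IH. Qed.

Lemma drop_set_nth_lt s i j e : (j < i)%N -> (j < size s)%N ->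
  drop i (set_nth x0 s j e) = drop i s.
Proof. by elim: s i j => [|a s IH] [|i] [|j] //= lt_ji lt_j; rewrite ?IH. Qed.

Lemma drop_set_nth_ge s i j e : (i <= j)%N -> (j < size s)%N ->
  drop i (set_nth x0 s j e) = set_nth x0 (drop i s) (j - i) e.
Proof. by elim: s i j => [|a s IH] [|i] [|j] //= le_ij lt_j; rewrite ?IH ?subn0. Qed.

Lemma seq2_nthE s : size s = 2%N -> s = [:: nth x0 s 0; nth x0 s 1].
Proof. by case: s => [|a [|b [|]]]. Qed.

End SetNth.

Section PointwiseProduct.
Variables (R : comPzRingType) (C : algType R).
Implicit Types (s t u : seq C) (e : C).

Lemma size_wmul s t : size (wmul s t) = minn (size s) (size t).
Proof. by rewrite /wmul size_map size_zip. Qed.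

Lemma wmul_cons a b s t : wmul (a :: s) (b :: t) = a * b :: wmul s t.
Proof. by []. Qed.

Lemma nth_wmul s t i : (i < size s)%N -> (i < size t)%N ->
  nth 0 (wmul s t) i = nth 0 s i * nth 0 t i.
Proof. by elim: s t i => [|a s IH] [|b t] [|i] //= *; apply: IH. Qed.

Lemma wmul_cat s1 s2 t1 t2 : size s1 = size t1 ->
  wmul (s1 ++ s2) (t1 ++ t2) = wmul s1 t1 ++ wmul s2 t2.
Proof. by move=> eq_size; rewrite /wmul zip_cat // map_cat. Qed.

Lemma take_wmul k s t : take k (wmul s t) = wmul (take k s) (take k t).
Proof.
elim: s t k => [|a s IH] [|b t] [|k] //=; try by rewrite IH.
all: by [case: (take k s) | case: (take k t)].
Qed.

Lemma drop_wmul k s t : drop k (wmul s t) = wmul (drop k s) (drop k t).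
Proof.
elim: s t k => [|a s IH] [|b t] [|k] //=; try by rewrite IH.
all: by [case: (drop k s) | case: (drop k t)].
Qed.

Lemma wmulA s t u : wmul (wmul s t) u = wmul s (wmul t u).
Proof. by elim: s t u => [|a s IH] [|b t] [|c u] //=; rewrite !wmul_cons IH mulrA. Qed.

Lemma wmul1s s : wmul (nseq (size s) 1) s = s.
Proof. by elim: s => [|a s IH] //=; rewrite wmul_cons IH mul1r. Qed.

Lemma wmuls1 s : wmul s (nseq (size s) 1) = s.
Proof. by elim: s => [|a s IH] //=; rewrite wmul_cons IH mulr1. Qed.

Lemma wmul_set_nthr s t i e : (i < size s)%N -> (i < size t)%N ->
  wmul s (set_nth 0 t i e) = set_nth 0 (wmul s t) i (nth 0 s i * e).
Proof. by elim: s t i => [|a s IH] [|b t] [|i] //= *; rewrite wmul_cons IH. Qed.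

Lemma wmul_set_nthl s t i e : (i < size s)%N -> (i < size t)%N ->
  wmul (set_nth 0 s i e) t = set_nth 0 (wmul s t) i (e * nth 0 t i).
Proof. by elim: s t i => [|a s IH] [|b t] [|i] //= *; rewrite wmul_cons IH. Qed.

Lemma wmul_splice i s1 s2 u t v : size s1 = size s2 -> (i < size s1)%N ->
  size u = size t -> size v = size t ->
  wmul (take i s1 ++ u ++ drop i.+1 s1) (take i s2 ++ wmul t v ++ drop i.+1 s2) =
  take i (wmul s1 s2) ++ wmul (wmul u t) v ++ drop i.+1 (wmul s1 s2).
Proof.
move=> eq_s lt_i eq_u eq_v.
rewrite wmul_cat; last by rewrite !size_take -eq_s lt_i.
rewrite wmul_cat; last by rewrite size_wmul eq_u eq_v minnn.
by rewrite take_wmul drop_wmul wmulA.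
Qed.

End PointwiseProduct.

Section TensorEvaluation.
Variables (R : comPzRingType) (C : lmodType R) (M : lmodType R).
Implicit Types (x y z : tens C) (phi psi : seq C -> M).

Lemma teval_cat phi x y : teval phi (x ++ y) = teval phi x + teval phi y.
Proof. by rewrite /teval big_cat. Qed.

Lemma teval_nil phi : teval phi [::] = 0.
Proof. by rewrite /teval big_nil. Qed.

Lemma teval_seq1 phi r w : teval phi [:: (r, w)] = r *: phi w.
Proof. by rewrite /teval big_seq1. Qed.

Lemma teval_tneg phi x : teval phi (tneg x) = - teval phi x.
Proof. by rewrite /teval big_map -sumrN; apply: eq_bigr => p _; rewrite scaleNr. Qed.

Lemma teval_scale phi x a :
  teval phi [seq (a * p.1, p.2) | p <- x] = a *: teval phi x.
Proof. by rewrite /teval big_map scaler_sumr; apply: eq_bigr => p _; rewrite scalerA. Qed.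

Lemma eq_teval phi psi x :
  (forall p, p \in x -> phi p.2 = psi p.2) -> teval phi x = teval psi x.
Proof. by move=> eq_phi; apply: eq_big_seq => p /eq_phi ->. Qed.

Lemma teval_linear (F G H : seq C -> M) (a : R) x :
  (forall p, p \in x -> F p.2 = a *: G p.2 + H p.2) ->
  teval F x = a *: teval G x + teval H x.
Proof.
move=> eqF; rewrite /teval scaler_sumr -big_split /=; apply: eq_big_seq => p /eqF ->.
by rewrite scalerDr !scalerA mulrC.
Qed.

Lemma teval_flatten phi x (G : R * seq C -> tens C)
    (F : R * seq C -> R * seq C -> seq C) :
  teval phi (flatten [seq [seq (p.1 * q.1, F p q) | q <- G p] | p <- x]) =
  \sum_(p <- x) p.1 *: \sum_(q <- G p) q.1 *: phi (F p q).
Proof.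
rewrite /teval big_flatten big_map; apply: eq_bigr => p _.
by rewrite big_map scaler_sumr; apply: eq_bigr => q _; rewrite scalerA.
Qed.

Lemma teval_exchange (F : seq C -> seq C -> M) x y :
  teval (fun v => teval (fun u => F u v) x) y =
  teval (fun u => teval (fun v => F u v) y) x.
Proof.
rewrite /teval; under eq_bigr do rewrite scaler_sumr.
rewrite exchange_big /=; apply: eq_bigr => p _; rewrite scaler_sumr.
by apply: eq_bigr => q _; rewrite !scalerA mulrC.
Qed.

Lemma teval_exchange4 (F : seq C -> seq C -> seq C -> seq C -> M)
    x y z (G : seq C -> tens C) :
  teval (fun u => teval (fun v => teval (fun w => teval (F u v w) z) y) (G u)) x =
  teval (fun t => teval (fun w => teval (fun u => teval (fun v => F u v w t) (G u)) x) y) z.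
Proof.
transitivity (teval (fun u => teval (fun v =>
    teval (fun t => teval (fun w => F u v w t) y) z) (G u)) x).
  by apply: eq_teval => u _; apply: eq_teval => v _; rewrite teval_exchange.
transitivity (teval (fun u => teval (fun t =>
    teval (fun v => teval (fun w => F u v w t) y) (G u)) z) x).
  by apply: eq_teval => u _; rewrite teval_exchange.
rewrite teval_exchange; apply: eq_teval => t _.
transitivity (teval (fun u => teval (fun w =>
    teval (fun v => F u v w t.2) (G u)) y) x).
  by apply: eq_teval => u _; rewrite teval_exchange.
by rewrite teval_exchange.
Qed.

End TensorEvaluation.

Section TensorEquality.
Variables (R : comPzRingType) (C : lmodType R) (n : nat).
Implicit Types (x y z : tens C) (f g h : C -> tens C).

Lemma teq_sym x y : teq n x y -> teq n y x.
Proof. by move=> eq_xy M phi ml_phi; rewrite (eq_xy M phi ml_phi). Qed.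

Lemma teq_trans x y z : teq n x y -> teq n y z -> teq n x z.
Proof. by move=> eq_xy eq_yz M phi ml_phi; rewrite eq_xy ?eq_yz. Qed.

Lemma teq_cat x x' y y' : teq n x x' -> teq n y y' -> teq n (x ++ y) (x' ++ y').
Proof. by move=> eq_x eq_y M phi ml_phi; rewrite !teval_cat eq_x ?eq_y. Qed.

Lemma teq_tneg x y : teq n x y -> teq n (tneg x) (tneg y).
Proof. by move=> eq_xy M phi ml_phi; rewrite !teval_tneg eq_xy. Qed.

Lemma heq_trans f g h : heq n f g -> heq n g h -> heq n f h.
Proof. by move=> eq_fg eq_gh c; apply: teq_trans (eq_fg c) (eq_gh c). Qed.

End TensorEquality.

Section Multilinear.
Variables (R : comPzRingType) (C : lmodType R) (M : lmodType R).
Implicit Types (s u v : seq C) (x : tens C) (phi psi : seq C -> M).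

Lemma eq_multilinear n phi psi : multilinear n phi ->
  (forall s, size s = n -> phi s = psi s) -> multilinear n psi.
Proof.
move=> ml_phi eq_phi s i a u v size_s lt_i.
by rewrite -!eq_phi ?size_set_nth_lt ?size_s //; apply: ml_phi.
Qed.

Lemma multilinear_teval n x (Phi : seq C -> seq C -> M) :
  (forall p, p \in x -> multilinear n (Phi p.2)) ->
  multilinear n (fun s => teval (fun w => Phi w s) x).
Proof. by move=> ml_Phi s i a u v *; apply: teval_linear => p /ml_Phi; apply. Qed.

Lemma multilinear_splice n u v phi : multilinear (size u + n + size v) phi ->
  multilinear n (fun s => phi (u ++ s ++ v)).
Proof.
move=> ml_phi s i a e e' size_s lt_i /=.
have := ml_phi (u ++ s ++ v) (size u + i)%N a e e'.
rewrite !set_nth_catr !set_nth_catl ?size_s //; apply.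
  by rewrite !size_cat size_s addnA.
lia.
Qed.

Lemma multilinear_catl n u phi : multilinear (size u + n) phi ->
  multilinear n (fun v => phi (u ++ v)).
Proof.
move=> ml_phi.
apply: (eq_multilinear (multilinear_splice (u := u) (v := [::]) (phi := phi) _)).
  by rewrite addn0.
by move=> s _; rewrite cats0.
Qed.

Lemma multilinear_cons n e phi : multilinear n.+1 phi ->
  multilinear n (fun t => phi (e :: t)).
Proof. exact: (multilinear_catl (u := [:: e])). Qed.

Lemma multilinear_nth0 (F : C -> M) :
  (forall a (u v : C), F (a *: u + v) = a *: F u + F v) ->
  multilinear 1 (fun s => F (nth 0 s 0)).
Proof.
move=> linF s [|i] a u v size_s // _.
by case: s size_s => [|c [|]] //= _; rewrite linF.
Qed.

End Multilinear.

Section MultilinearProduct.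
Variables (R : comPzRingType) (C : algType R) (M : lmodType R).
Implicit Types (s t : seq C) (phi : seq C -> M).

Lemma multilinear_wmull n t phi : size t = n -> multilinear n phi ->
  multilinear n (fun s => phi (wmul t s)).
Proof.
move=> size_t ml_phi s i a u v size_s lt_i /=.
rewrite !wmul_set_nthr ?size_t ?size_s // mulrDr -scalerAr; apply: ml_phi => //.
by rewrite size_wmul size_t size_s minnn.
Qed.

Lemma multilinear_wmulr n t phi : size t = n -> multilinear n phi ->
  multilinear n (fun s => phi (wmul s t)).
Proof.
move=> size_t ml_phi s i a u v size_s lt_i /=.
rewrite !wmul_set_nthl ?size_t ?size_s // mulrDl -scalerAl; apply: ml_phi => //.
by rewrite size_wmul size_t size_s minnn.
Qed.

End MultilinearProduct.

Section Homomorphisms.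
Variables (R : comPzRingType) (C : lmodType R).
Implicit Types (x : tens C) (g : C -> tens C).

Lemma twf_size n x p : twf n x -> p \in x -> size p.2 = n.
Proof. by move=> wf_x x_p; apply/eqP; exact: (allP wf_x). Qed.

Lemma thom_wf n g c : thom n g -> twf n (g c).
Proof. by case. Qed.

Lemma thom_teval n g (M : lmodType R) (phi : seq C -> M) a u v :
  thom n g -> multilinear n phi ->
  teval phi (g (a *: u + v)) = a *: teval phi (g u) + teval phi (g v).
Proof. by case=> _ lin_g ml_phi; rewrite (lin_g a u v M phi ml_phi) teval_cat teval_scale. Qed.

Lemma teval_linear_thom n g : (forall c, twf n (g c)) ->
  (forall (M : lmodType R) (phi : seq C -> M) a u v, multilinear n phi ->
     teval phi (g (a *: u + v)) = a *: teval phi (g u) + teval phi (g v)) ->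
  thom n g.
Proof.
by move=> wf_g lin_g; split=> // a u v M phi ml_phi; rewrite teval_cat teval_scale lin_g.
Qed.

(* Dual to [CE_circ i.+1 _ g] (note the 0-based index), see [teval_CE_circ]. *)
Definition plug (M : lmodType R) i g (phi : seq C -> M) : seq C -> M :=
  fun s => teval (fun w => phi (take i s ++ w ++ drop i.+1 s)) (g (nth 0 s i)).

Lemma multilinear_plug (M : lmodType R) i m n k g (phi : seq C -> M) :
  (i < m)%N -> k = (m.-1 + n)%N -> thom n g -> multilinear k phi ->
  multilinear m (plug i g phi).
Proof.
move=> lt_im -> hom_g ml_phi s j a u v size_s lt_jm; rewrite /plug.
have [->|ne_ji] := eqVneq j i.
  rewrite !nth_set_nth /= eqxx !take_set_nth_ge ?size_s //.
  rewrite !drop_set_nth_lt ?size_s //; apply: thom_teval hom_g _.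
  apply: multilinear_splice; rewrite size_take size_drop size_s lt_im.
  by have -> : (i + n + (m - i.+1) = m.-1 + n)%N by lia.
rewrite !nth_set_nth /= eq_sym (negbTE ne_ji).
apply: teval_linear => p g_p; have size_p := twf_size (thom_wf _ hom_g) g_p.
have size_sp : size (take i s ++ p.2 ++ drop i.+1 s) = (m.-1 + n)%N.
  by rewrite !size_cat size_take size_drop size_s lt_im size_p; lia.
have [lt_ji|le_ij] := ltnP j i.
  rewrite !take_set_nth_lt ?size_s // !drop_set_nth_lt ?size_s //; try lia.
  rewrite -!set_nth_catl ?size_take ?size_s ?lt_im //.
  by apply: ml_phi => //; lia.
have lt_ij : (i < j)%N by rewrite ltn_neqAle eq_sym ne_ji le_ij.
rewrite !take_set_nth_ge ?size_s // ?ltnW // !drop_set_nth_ge ?size_s //.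
have shift e : take i s ++ p.2 ++ set_nth 0 (drop i.+1 s) (j - i.+1) e =
    set_nth 0 (take i s ++ p.2 ++ drop i.+1 s) (size (take i s ++ p.2) + (j - i.+1)) e.
  by rewrite [in RHS]catA set_nth_catr catA.
rewrite !shift; apply: ml_phi => //.
rewrite size_cat size_take size_s lt_im size_p; lia.
Qed.

End Homomorphisms.

Section Bialgebra.
Variables (R : comPzRingType) (C : algType R) (Delta : C -> tens C) (eps : C -> R).
Hypothesis bialg : is_bialgebra Delta eps.
Implicit Types (c : C).

Local Notation D := (deltan Delta eps).

Lemma Delta_thom : thom 2 Delta.
Proof. by case: bialg => [[]]. Qed.

Lemma size_Delta c p : p \in Delta c -> size p.2 = 2%N.
Proof. exact/twf_size/thom_wf/Delta_thom. Qed.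

Lemma eps_linear a u v : eps (a *: u + v) = a * eps u + eps v.
Proof. by case: bialg => [[]]. Qed.

Lemma epsM a b : eps (a * b) = eps a * eps b.
Proof. by case: bialg => _ _ _ _ []. Qed.

Lemma eps1 : eps 1 = 1.
Proof. by case: bialg => _ _ _ _ []. Qed.

Lemma teval_DeltaM (M : lmodType R) (phi : seq C -> M) a b : multilinear 2 phi ->
  teval phi (Delta (a * b)) =
  teval (fun u => teval (fun v => phi (wmul u v)) (Delta b)) (Delta a).
Proof. by case: bialg => _ _ _ [DeltaM _] _ ml_phi; rewrite DeltaM // teval_flatten. Qed.

Lemma teval_Delta1 (M : lmodType R) (phi : seq C -> M) :
  multilinear 2 phi -> teval phi (Delta 1) = phi [:: 1; 1].
Proof.
by case: bialg => _ _ _ [_ Delta1] _ ml_phi; rewrite Delta1 // teval_seq1 scale1r.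
Qed.

Lemma teval_coassoc (M : lmodType R) (phi : seq C -> M) c : multilinear 3 phi ->
  teval (fun w => teval (fun q => phi [:: nth 0 q 0; nth 0 q 1; nth 0 w 1])
     (Delta (nth 0 w 0))) (Delta c) =
  teval (fun w => teval (fun q => phi [:: nth 0 w 0; nth 0 q 0; nth 0 q 1])
     (Delta (nth 0 w 1))) (Delta c).
Proof.
case: bialg => _ coassoc _ _ _ ml_phi; have := coassoc c M phi ml_phi.
rewrite /CE_circ !teval_flatten => eq_circ.
transitivity (\sum_(p <- Delta c) p.1 *: \sum_(q <- Delta (nth 0 p.2 0)) q.1 *:
     phi (take 0 p.2 ++ q.2 ++ drop 1 p.2)).
  apply: eq_big_seq => p Dp; congr (_ *: _); apply: eq_big_seq => q Dq.
  by rewrite (seq2_nthE 0 (size_Delta Dp)) (seq2_nthE 0 (size_Delta Dq)).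
rewrite eq_circ; apply: eq_big_seq => p Dp; congr (_ *: _).
apply: eq_big_seq => q Dq.
by rewrite (seq2_nthE 0 (size_Delta Dp)) (seq2_nthE 0 (size_Delta Dq)).
Qed.

Lemma teval_counitl (M : lmodType R) (phi : seq C -> M) c : multilinear 1 phi ->
  teval (fun w => eps (nth 0 w 0) *: phi [:: nth 0 w 1]) (Delta c) = phi [:: c].
Proof.
case: bialg => _ _ [counit _] _ _ ml_phi; have := counit c M phi ml_phi.
rewrite /CE_circ /CE_id teval_flatten teval_seq1 scale1r => <-.
apply: eq_big_seq => p Dp; rewrite big_seq1 /=.
by rewrite (seq2_nthE 0 (size_Delta Dp)).
Qed.

Lemma teval_counitr (M : lmodType R) (phi : seq C -> M) c : multilinear 1 phi ->
  teval (fun w => eps (nth 0 w 1) *: phi [:: nth 0 w 0]) (Delta c) = phi [:: c].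
Proof.
case: bialg => _ _ [_ counit] _ _ ml_phi; have := counit c M phi ml_phi.
rewrite /CE_circ /CE_id teval_flatten teval_seq1 scale1r => <-.
apply: eq_big_seq => p Dp; rewrite big_seq1 /=.
by rewrite (seq2_nthE 0 (size_Delta Dp)).
Qed.

Lemma deltan_wf n c : twf n (D n c).
Proof.
case: n => [|n] //=; elim: n c => [|n IH] c //=.
apply/allP => r /flattenP [l /mapP [p _ ->]] /mapP [q Dq ->] /=.
by rewrite eqSS (twf_size (IH _) Dq).
Qed.

Lemma size_deltan n c p : p \in D n c -> size p.2 = n.
Proof. exact/twf_size/deltan_wf. Qed.

Lemma teval_deltanSS (M : lmodType R) (phi : seq C -> M) k c :
  teval phi (D k.+2 c) =
  teval (fun w => teval (fun t => phi (nth 0 w 0 :: t)) (D k.+1 (nth 0 w 1))) (Delta c).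
Proof. by rewrite /= teval_flatten. Qed.

Lemma multilinear_deltan_tail (M : lmodType R) (phi : seq C -> M) k :
  thom k.+1 (D k.+1) -> multilinear k.+2 phi ->
  multilinear 2 (fun w => teval (fun t => phi (nth 0 w 0 :: t)) (D k.+1 (nth 0 w 1))).
Proof.
move=> hom_D ml_phi.
apply: (eq_multilinear (multilinear_plug (i := 1) (m := 2) _ _ hom_D ml_phi)) => //.
by move=> w /(seq2_nthE 0) ->; rewrite /plug /=; apply: eq_teval => p _; rewrite cats0.
Qed.

Lemma deltan_thom n : thom n (D n).
Proof.
apply: teval_linear_thom => [c|]; first exact: deltan_wf.
elim: n => [|[|k] IH] N phi a u v ml_phi.
- by rewrite /= !teval_seq1 eps_linear scalerDl scalerA.
- by rewrite /= !teval_seq1 !scale1r; apply: (ml_phi [:: 0] 0%N).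
rewrite !teval_deltanSS; apply: thom_teval Delta_thom _.
exact: multilinear_deltan_tail (teval_linear_thom (@deltan_wf _) IH) ml_phi.
Qed.


Lemma teval_deltan_cat (M : lmodType R) (phi : seq C -> M) n j c :
  multilinear (n + j) phi ->
  teval phi (D (n + j) c) =
  teval (fun w => teval (fun u => teval (fun v => phi (u ++ v)) (D j (nth 0 w 1)))
        (D n (nth 0 w 0))) (Delta c).
Proof.
elim: n j c phi => [|[|n] IH] j c phi ml_phi.
- rewrite add0n in ml_phi *.
  have lin_D a u v : teval phi (D j (a *: u + v)) = a *: teval phi (D j u) + teval phi (D j v).
    exact: thom_teval (deltan_thom j) ml_phi.
  rewrite -(teval_counitl c (multilinear_nth0 lin_D)).
  by apply: eq_teval => p _ /=; rewrite teval_seq1.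
- case: j ml_phi => [|j] ml_phi.
    rewrite [D (1 + 0) c]/= teval_seq1 scale1r -(teval_counitr c ml_phi) /=.
    by apply: eq_teval => p _ /=; rewrite !teval_seq1 scale1r.
  rewrite [(1 + j.+1)%N]/= teval_deltanSS; apply: eq_teval => p _ /=.
  by rewrite teval_seq1 scale1r.
have -> : (n.+2 + j = (n + j).+2)%N by rewrite !addSn.
rewrite teval_deltanSS.
transitivity (teval (fun w => teval (fun w' =>
   teval (fun u => teval (fun v => phi (nth 0 w 0 :: u ++ v)) (D j (nth 0 w' 1)))
     (D n.+1 (nth 0 w' 0))) (Delta (nth 0 w 1))) (Delta c)).
  apply: eq_teval => p _; rewrite -addSn; apply: IH.
  by apply: multilinear_cons; rewrite -addSn.
symmetry; transitivity (teval (fun w => teval (fun w' => teval (fun u =>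
   teval (fun v => phi (nth 0 w' 0 :: u ++ v)) (D j (nth 0 w 1)))
     (D n.+1 (nth 0 w' 1))) (Delta (nth 0 w 0))) (Delta c)).
  by apply: eq_teval => p _; rewrite teval_deltanSS.
set G := fun a b d => teval (fun u => teval (fun v => phi (a :: u ++ v)) (D j d))
    (D n.+1 b).
rewrite (teval_coassoc (phi := fun s => G (nth 0 s 0) (nth 0 s 1) (nth 0 s 2))) //.
have ml_G := multilinear_plug (ltnSn n.+2) erefl (deltan_thom _) ml_phi.
apply: (eq_multilinear (multilinear_plug (i := 1) (m := 3) _ erefl (deltan_thom _) ml_G)).
  by [].
move=> s size_s; have -> : s = [:: nth 0 s 0; nth 0 s 1; nth 0 s 2].
  by case: s size_s => [|a [|b [|d [|]]]].
rewrite /plug /=; apply: eq_teval => p Dp; have size_p := size_deltan (n := n.+1) Dp.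
rewrite -{1}size_p take_size_cat // drop_oversize ?size_cat ?size_p ?addn1 //.
rewrite nth_cat size_p ltnn subnn /=.
by apply: eq_teval => q _; rewrite cats0.
Qed.

Lemma teval_plug0_deltan (M : lmodType R) (phi : seq C -> M) k n c :
  multilinear (n + k) phi ->
  teval (plug 0 (D n) phi) (D k.+1 c) = teval phi (D (n + k) c).
Proof.
case: k => [|k] ml_phi.
  rewrite addn0 [D 1 c]/= teval_seq1 scale1r /plug /=.
  by apply: eq_teval => p _; rewrite cats0.
rewrite teval_deltanSS (teval_deltan_cat c ml_phi); apply: eq_teval => p _.
by rewrite -teval_exchange; apply: eq_teval => q _; rewrite /plug /= drop0.
Qed.

(* Coassociativity in the form
   Delta^(i+n+k) = (id^i (x) Delta^n (x) id^k) Delta^(i+k+1). *)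
Lemma teval_deltan_plug (M : lmodType R) (phi : seq C -> M) i k n c :
  multilinear (i + (n + k)) phi ->
  teval phi (D (i + (n + k)) c) = teval (plug i (D n) phi) (D (i + k.+1) c).
Proof.
move=> ml_phi.
have ml_plug : multilinear (i + k.+1) (plug i (D n) phi).
  by apply: multilinear_plug (deltan_thom n) ml_phi; lia.
rewrite (teval_deltan_cat c ml_phi) (teval_deltan_cat c ml_plug).
apply: eq_teval => p _; apply: eq_teval => u Du; have size_u := size_deltan Du.
rewrite -teval_plug0_deltan; last by apply: multilinear_catl; rewrite size_u.
apply: eq_teval => v _; rewrite /plug /= take_size_cat // drop_cat nth_cat size_u.
by rewrite ltnn subnn ltnNge leqnSn /= subSnn take0.
Qed.

Lemma teval_deltanM (M : lmodType R) (phi : seq C -> M) n a b : multilinear n phi ->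
  teval phi (D n (a * b)) =
  teval (fun u => teval (fun v => phi (wmul u v)) (D n b)) (D n a).
Proof.
elim: n a b phi => [|[|k] IH] a b phi ml_phi.
- by rewrite /= !teval_seq1 epsM scalerA.
- by rewrite /= !teval_seq1 !scale1r.
rewrite teval_deltanSS teval_DeltaM; last first.
  exact: multilinear_deltan_tail (deltan_thom _) ml_phi.
rewrite teval_deltanSS; apply: eq_teval => p Dp.
transitivity (teval (fun t => teval (fun q => teval (fun t' =>
    phi (wmul (nth 0 p.2 0 :: t) (nth 0 q 0 :: t'))) (D k.+1 (nth 0 q 1))) (Delta b))
    (D k.+1 (nth 0 p.2 1))); last by apply: eq_teval => t _; rewrite teval_deltanSS.
rewrite teval_exchange; apply: eq_teval => q Dq.
rewrite (seq2_nthE 0 (size_Delta Dp)) (seq2_nthE 0 (size_Delta Dq)) /=.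
by rewrite IH //; apply: multilinear_cons.
Qed.

Lemma teval_deltan1 (M : lmodType R) (phi : seq C -> M) n : multilinear n phi ->
  teval phi (D n 1) = phi (nseq n 1).
Proof.
elim: n phi => [|[|k] IH] phi ml_phi.
- by rewrite /= teval_seq1 eps1 scale1r.
- by rewrite /= teval_seq1 scale1r.
rewrite teval_deltanSS teval_Delta1 /=; last first.
  exact: multilinear_deltan_tail (deltan_thom _) ml_phi.
by rewrite IH //; apply: multilinear_cons.
Qed.

Lemma teval_deltan2 (M : lmodType R) (phi : seq C -> M) c :
  teval phi (D 2 c) = teval phi (Delta c).
Proof.
rewrite [D 2 c]/= /teval big_flatten big_map; apply: eq_big_seq => p Dp.
by rewrite big_seq1 /= mulr1 {3}(seq2_nthE 0 (size_Delta Dp)).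
Qed.

End Bialgebra.

Section ExtMorphism.
Variables (R : comPzRingType) (C : algType R) (Delta : C -> tens C) (eps : C -> R).
Hypothesis bialg : is_bialgebra Delta eps.
Implicit Types (x y : tens C) (c : C) (f g : C -> tens C).

Local Notation D := (deltan Delta eps).
Local Notation ext := (ext Delta eps).

Lemma teval_ext (M : lmodType R) (phi : seq C -> M) n x c :
  teval phi (ext n x c) = teval (fun w => teval (fun d => phi (wmul d w)) (D n c)) x.
Proof. by rewrite /ext teval_flatten. Qed.

Lemma teval_ext_deltan (M : lmodType R) (phi : seq C -> M) n x c :
  teval phi (ext n x c) = teval (fun d => teval (fun w => phi (wmul d w)) x) (D n c).
Proof. by rewrite teval_ext teval_exchange. Qed.

Lemma ext_teq n x y : teq n x y -> heq n (ext n x) (ext n y).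
Proof.
move=> eq_xy c M phi ml_phi; rewrite !teval_ext; apply: eq_xy.
apply: multilinear_teval => p Dp; apply: multilinear_wmull ml_phi.
exact: size_deltan Dp.
Qed.

Lemma ext_thom n x : twf n x -> thom n (ext n x).
Proof.
move=> wf_x; apply: teval_linear_thom => [c|M phi a u v ml_phi].
  apply/allP => r /flattenP [l /mapP [p x_p ->]] /mapP [q Dq ->] /=.
  by rewrite size_wmul (size_deltan Dq) (twf_size wf_x x_p) minnn.
rewrite !teval_ext_deltan; apply: thom_teval (deltan_thom bialg n) _.
apply: multilinear_teval => p x_p; apply: multilinear_wmulr ml_phi.
exact: twf_size wf_x x_p.
Qed.

Lemma teval_OC_circ (M : lmodType R) (phi : seq C -> M) i x y :
  teval phi (OC_circ Delta eps i x y) =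
  teval (fun w => teval (fun v => teval (fun t =>
     phi (take i.-1 w ++ wmul t v ++ drop i w)) (D (size v) (nth 0 w i.-1))) y) x.
Proof.
rewrite /OC_circ /teval big_flatten big_map; apply: eq_bigr => p _.
rewrite big_flatten big_map scaler_sumr; apply: eq_bigr => q _.
by rewrite big_map !scaler_sumr; apply: eq_bigr => t _; rewrite !scalerA.
Qed.

Lemma teval_CE_circ (M : lmodType R) (phi : seq C -> M) i f g c :
  teval phi (CE_circ i.+1 f g c) = teval (plug i g phi) (f c).
Proof. by rewrite /CE_circ teval_flatten. Qed.

(* Both sides expand, through coassociativity resp. multiplicativity of the
   iterated coproduct, into the same fivefold sum over
   Delta^m(c) (x) Delta^n(c_i) (x) x (x) Delta^n(x_i) (x) y. *)
Lemma ext_circ i m n x y : twf m x -> twf n y -> (i < m)%N ->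
  heq (m.-1 + n) (ext (m.-1 + n) (OC_circ Delta eps i.+1 x y))
                 (CE_circ i.+1 (ext m x) (ext n y)).
Proof.
move=> wf_x wf_y lt_im c M phi ml_phi.
rewrite teval_ext teval_OC_circ teval_CE_circ teval_ext_deltan.
have [k def_m] : exists k, m = (i + k.+1)%N by exists (m - i.+1)%N; lia.
have def_K : (m.-1 + n = i + (n + k))%N by lia.
rewrite def_K in ml_phi *.
transitivity (teval (fun p => teval (fun q => teval (fun t => teval (fun e =>
    teval (fun e' => phi (wmul (take i e ++ e' ++ drop i.+1 e)
                               (take i p ++ wmul t q ++ drop i.+1 p)))
    (D n (nth 0 e i))) (D m c)) (D n (nth 0 p i))) y) x).
  apply: eq_teval => p x_p; apply: eq_teval => q y_q.
  rewrite /= (twf_size wf_y y_q); apply: eq_teval => t Dt.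
  rewrite def_m (teval_deltan_plug bialg c) //; apply: multilinear_wmulr ml_phi.
  rewrite !size_cat size_take size_drop size_wmul (twf_size wf_x x_p) lt_im.
  by rewrite (size_deltan Dt) (twf_size wf_y y_q) minnn; lia.
symmetry; transitivity (teval (fun e => teval (fun p => teval (fun e' => teval (fun t =>
    teval (fun q => phi (take i (wmul e p) ++ wmul (wmul e' t) q ++ drop i.+1 (wmul e p))) y)
    (D n (nth 0 p i))) (D n (nth 0 e i))) x) (D m c)).
  apply: eq_teval => e De; apply: eq_teval => p x_p.
  have size_e := size_deltan De; have size_p := twf_size wf_x x_p.
  rewrite /plug teval_ext_deltan nth_wmul ?size_e ?size_p //.
  rewrite (teval_deltanM bialg) //; apply: multilinear_teval => q y_q.
  apply: (multilinear_wmulr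
    (phi := fun s => phi (take i (wmul e.2 p.2) ++ s ++ drop i.+1 (wmul e.2 p.2)))).
    exact: twf_size wf_y y_q.
  apply: multilinear_splice; rewrite size_take size_drop size_wmul size_e size_p minnn lt_im.
  by have -> : (i + n + (m - i.+1) = i + (n + k))%N by lia.
rewrite teval_exchange; apply: eq_teval => p x_p.
rewrite teval_exchange4; apply: eq_teval => q y_q; apply: eq_teval => t Dt.
apply: eq_teval => e De; apply: eq_teval => e' De'.
rewrite wmul_splice ?(size_deltan De) ?(twf_size wf_x x_p) //.
  by rewrite (size_deltan De') (size_deltan Dt).
by rewrite (twf_size wf_y y_q) (size_deltan Dt).
Qed.

End ExtMorphism.

Section CochainOperations.
Variables (R : comPzRingType) (C : algType R) (Delta : C -> tens C) (eps : C -> R).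
Implicit Types (x y : tens C) (c : C) (f g : C -> tens C).

Local Notation OCo := (OC_op Delta eps).
Local Notation CEo := (CE_op Delta).
Local Notation ext := (ext Delta eps).

Lemma osgn_apply b f c : osgn CEo b f c = osgn OCo b (f c).
Proof. by case: b. Qed.

Lemma osum_sgn_apply (F : nat -> C -> tens C) (B : nat -> bool) s c :
  osum CEo (fun i => osgn CEo (B i) (F i)) s c =
  osum OCo (fun i => osgn OCo (B i) (F i c)) s.
Proof. by elim: s => [|i s IH] //=; rewrite IH osgn_apply. Qed.

Lemma teq_osgn n b x y : teq n x y -> teq n (osgn OCo b x) (osgn OCo b y).
Proof. by case: b => //=; apply: teq_tneg. Qed.

Lemma teq_osum_sgn n (F G : nat -> tens C) (B : nat -> bool) s :
  (forall i, i \in s -> teq n (F i) (G i)) ->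
  teq n (osum OCo (fun i => osgn OCo (B i) (F i)) s)
        (osum OCo (fun i => osgn OCo (B i) (G i)) s).
Proof.
elim: s => [|i s IH] eq_FG //=.
apply: teq_cat; first by apply/teq_osgn/eq_FG; rewrite inE eqxx.
by apply: IH => j s_j; apply: eq_FG; rewrite inE s_j orbT.
Qed.

Lemma ext_cat n x y c : ext n (x ++ y) c = ext n x c ++ ext n y c.
Proof. by rewrite /ext map_cat flatten_cat. Qed.

Lemma ext_tneg n k x c : teq k (ext n (tneg x) c) (tneg (ext n x c)).
Proof. by move=> M phi _; rewrite teval_tneg !teval_ext teval_tneg. Qed.

Lemma ext_osgn n b x c : teq n (ext n (osgn OCo b x) c) (osgn OCo b (ext n x c)).
Proof. by case: b => //=; apply: ext_tneg. Qed.

Lemma ext_osum_sgn n (F : nat -> tens C) (B : nat -> bool) s c :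
  teq n (ext n (osum OCo (fun i => osgn OCo (B i) (F i)) s) c)
        (osum OCo (fun i => osgn OCo (B i) (ext n (F i) c)) s).
Proof.
elim: s => [|i s IH] //=; rewrite ext_cat.
by apply: teq_cat => //; apply: ext_osgn.
Qed.

Lemma CE_circ_heql i m k f f' g : heq m f f' -> thom k g -> (i < m)%N ->
  heq (m.-1 + k) (CE_circ i.+1 f g) (CE_circ i.+1 f' g).
Proof.
move=> eq_f hom_g lt_im c M phi ml_phi; rewrite !teval_CE_circ; apply: eq_f.
exact: multilinear_plug lt_im erefl hom_g ml_phi.
Qed.

Lemma CE_circ_heqr i m k f g g' : (forall c, twf m (f c)) -> heq k g g' -> (i < m)%N ->
  heq (m.-1 + k) (CE_circ i.+1 f g) (CE_circ i.+1 f g').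
Proof.
move=> wf_f eq_g lt_im c M phi ml_phi; rewrite !teval_CE_circ.
apply: eq_teval => p f_p; apply: eq_g; apply: multilinear_splice.
rewrite size_take size_drop (twf_size (wf_f c) f_p) lt_im.
by have -> : (i + k + (m - i.+1) = m.-1 + k)%N by lia.
Qed.

Lemma twf_OC_circ i m n x y : twf m x -> twf n y -> (i < m)%N ->
  twf (m.-1 + n) (OC_circ Delta eps i.+1 x y).
Proof.
move=> wf_x wf_y lt_im; apply/allP => r /flattenP [l /mapP [p x_p ->]].
move=> /flattenP [l' /mapP [q y_q ->]] /mapP [t Dt ->] /=.
rewrite (twf_size wf_y y_q) in Dt.
rewrite !size_cat size_take size_drop size_wmul (twf_size wf_x x_p) lt_im.
by rewrite (twf_size wf_y y_q) (size_deltan Dt) minnn; apply/eqP; lia.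
Qed.

Lemma teval_odiff0 (M : lmodType R) (phi : seq C -> M) k c :
  teval phi (odiff CEo k (fun _ => [::]) c) = 0.
Proof.
have circ0 i f : teval phi (CE_circ i f (fun _ => [::]) c) = 0.
  by rewrite /CE_circ /teval big_flatten big_map big1 // => p _; rewrite big_nil.
rewrite /odiff /= !teval_cat circ0 add0r.
have -> : teval phi (osgn CEo (~~ odd k) (CE_circ 1 Delta (fun _ => [::])) c) = 0.
  by case: (~~ _); rewrite /= ?teval_tneg circ0 ?oppr0.
rewrite addr0; elim: (iota 1 k) => [|i s IH] /=; first exact: teval_nil.
by rewrite teval_cat IH addr0; case: (odd i); rewrite /= ?teval_tneg teval_nil ?oppr0.
Qed.

Lemma CE_cobound_heq n f g : heq n f g -> CE_cobound Delta n (oadd CEo f (oneg CEo g)).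
Proof.
case: n => [|k] eq_fg.
  move=> c M phi ml_phi /=.
  by rewrite teval_cat teval_tneg (eq_fg c M phi ml_phi) subrr teval_nil.
exists (fun _ => [::]); split.
  by split=> // a u v N phi _; rewrite teval_cat teval_scale !teval_nil addr0 scaler0.
move=> c M phi ml_phi /=.
by rewrite teval_cat teval_tneg (eq_fg c M phi ml_phi) subrr teval_odiff0.
Qed.

End CochainOperations.

Section ExtCohomology.
Variables (R : comPzRingType) (C : algType R) (Delta : C -> tens C) (eps : C -> R).
Hypothesis bialg : is_bialgebra Delta eps.
Implicit Types (x y : tens C) (c : C) (g : C -> tens C).

Local Notation OCo := (OC_op Delta eps).
Local Notation CEo := (CE_op Delta).
Local Notation ext := (ext Delta eps).
Local Notation OC_mu := [:: ((1 : R), [:: (1 : C); 1])].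

Lemma ext_mu : heq 2 (ext 2 OC_mu) Delta.
Proof.
move=> c M phi ml_phi; rewrite teval_ext_deltan teval_deltan2 //.
apply: eq_teval => p Dp; rewrite teval_seq1 scale1r.
by rewrite -[in RHS](wmuls1 p.2) (size_Delta bialg Dp).
Qed.

Lemma ext_mu_circ i n x : twf n x -> (i < 2)%N ->
  heq n.+1 (ext n.+1 (OC_circ Delta eps i.+1 OC_mu x)) (CE_circ i.+1 Delta (ext n x)).
Proof.
move=> wf_x lt_i2; apply: heq_trans (ext_circ bialg (m := 2) _ wf_x lt_i2) _ => //.
exact: CE_circ_heql ext_mu (ext_thom bialg wf_x) lt_i2.
Qed.

Lemma ext_circ_mu i n x : twf n x -> (i < n)%N ->
  heq n.+1 (ext n.+1 (OC_circ Delta eps i.+1 x OC_mu)) (CE_circ i.+1 (ext n x) Delta).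
Proof.
move=> wf_x lt_in; have def_n : (n.-1 + 2 = n.+1)%N by lia.
have := ext_circ bialg (n := 2) wf_x (erefl : twf 2 OC_mu) lt_in; rewrite def_n => eq_circ.
apply: heq_trans eq_circ _.
have := CE_circ_heqr (fun c => thom_wf c (ext_thom bialg wf_x)) ext_mu lt_in.
by rewrite def_n.
Qed.

Lemma ext_odiff n x : twf n x ->
  heq n.+1 (ext n.+1 (odiff OCo n x)) (odiff CEo n (ext n x)).
Proof.
move=> wf_x c; rewrite /odiff /= (ext_cat Delta eps _ (OC_circ _ _ 2 _ _)).
rewrite (ext_cat Delta eps _ (osum _ _ _)) (osum_sgn_apply Delta eps) (osgn_apply Delta eps).
apply: teq_cat; first exact: (ext_mu_circ (i := 1) wf_x erefl c).
apply: teq_cat.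
  apply: teq_trans; first exact: ext_osum_sgn.
  apply: teq_osum_sgn => -[|i]; rewrite mem_iota // => /andP [_ lt_i].
  by apply: ext_circ_mu; rewrite // add1n ltnS in lt_i.
apply: teq_trans; first exact: ext_osgn.
exact/teq_osgn/(ext_mu_circ (i := 0) wf_x erefl c).
Qed.

Lemma ext_at1 n x : twf n x -> teq n (ext n x 1) x.
Proof.
move=> wf_x M phi ml_phi; rewrite teval_ext; apply: eq_teval => p x_p.
have size_p := twf_size wf_x x_p.
rewrite (teval_deltan1 bialg); last exact: multilinear_wmulr ml_phi.
by rewrite -size_p wmul1s.
Qed.

Lemma CE_circ_Delta_at1 i k g : thom k g -> (i < 2)%N ->
  teq k.+1 (CE_circ i.+1 Delta g 1) (OC_circ Delta eps i.+1 OC_mu (g 1)).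
Proof.
move=> hom_g lt_i2 M phi ml_phi; rewrite teval_CE_circ teval_OC_circ.
rewrite (teval_Delta1 bialg); last exact: multilinear_plug lt_i2 erefl hom_g ml_phi.
have ml_slot : multilinear k (fun s => phi (take i [:: 1; 1] ++ s ++ drop i.+1 [:: 1; 1])).
  by apply: multilinear_splice; case: i lt_i2 => [|[|]] //= _; rewrite ?addn0 ?addn1.
have mu_i : nth 0 [:: 1; 1] i = 1 :> C by case: i lt_i2 {ml_slot} => [|[|]].
rewrite !teval_seq1 !scale1r /plug mu_i; apply: eq_teval => v g_v.
have size_v := twf_size (thom_wf 1 hom_g) g_v.
rewrite size_v (teval_deltan1 bialg) -?size_v ?wmul1s //.
by rewrite size_v; apply: multilinear_wmulr size_v ml_slot.
Qed.

Lemma CE_circ_at1_Delta i k g : thom k g -> (i < k)%N ->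
  teq k.+1 (CE_circ i.+1 g Delta 1) (OC_circ Delta eps i.+1 (g 1) OC_mu).
Proof.
move=> hom_g lt_ik M phi ml_phi; rewrite teval_CE_circ teval_OC_circ.
apply: eq_teval => w _; rewrite teval_seq1 scale1r /plug (teval_deltan2 bialg) /=.
apply: eq_teval => t Dt.
by rewrite -{1}(wmuls1 t.2) (size_Delta bialg Dt).
Qed.

Lemma odiff_at1 k g : thom k g -> teq k.+1 (odiff CEo k g 1) (odiff OCo k (g 1)).
Proof.
move=> hom_g; rewrite /odiff /= (osum_sgn_apply Delta eps) (osgn_apply Delta eps).
apply: teq_cat; first exact: CE_circ_Delta_at1.
apply: teq_cat; last exact/teq_osgn/CE_circ_Delta_at1.
apply: teq_osum_sgn => -[|i]; rewrite mem_iota // => /andP [_ lt_i].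
by apply: CE_circ_at1_Delta; rewrite // add1n ltnS in lt_i.
Qed.

Lemma ext_cup m n x y : twf m x -> twf n y ->
  heq (m + n) (ext (m + n) (ocup OCo m x y)) (ocup CEo m (ext m x) (ext n y)).
Proof.
move=> wf_x wf_y; rewrite /ocup.
have wf_mux := twf_OC_circ Delta eps (i := 0) (isT : twf 2 OC_mu) wf_x erefl.
apply: heq_trans (ext_circ bialg (i := m) (m := m.+1) wf_mux wf_y (ltnSn m)) _.
exact: CE_circ_heql (ext_mu_circ (i := 0) wf_x erefl) (ext_thom bialg wf_y) (ltnSn m).
Qed.

Lemma ext_bracket m n x y : twf m x -> twf n y ->
  heq (m + n).-1 (ext (m + n).-1 (obracket OCo m n x y))
      (obracket CEo m n (ext m x) (ext n y)).
Proof.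
move=> wf_x wf_y c; rewrite /obracket /obar /= ext_cat.
rewrite !(osgn_apply Delta eps) !(osum_sgn_apply Delta eps).
have ext_circ_sum l k (u v : tens C) : twf l u -> twf k v -> (l + k).-1 = (m + n).-1 ->
  forall i, i \in iota 1 l ->
  teq (m + n).-1 (ext (m + n).-1 (OC_circ Delta eps i u v) c)
                 (CE_circ i (ext l u) (ext k v) c).
  move=> wf_u wf_v eq_lk [|i]; rewrite mem_iota // => /andP [_ lt_i].
  rewrite add1n ltnS in lt_i; have -> : (m + n).-1 = (l.-1 + k)%N by lia.
  exact: ext_circ.
apply: teq_cat.
  apply: teq_trans; first exact: ext_osgn; apply: teq_osgn.
  apply: teq_trans; first exact: ext_osum_sgn.
  by apply: teq_osum_sgn; apply: ext_circ_sum.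
apply: teq_trans; first exact: ext_tneg; apply: teq_tneg.
apply: teq_trans; first exact: ext_osgn; apply: teq_osgn.
apply: teq_trans; first exact: ext_osgn; apply: teq_osgn.
apply: teq_trans; first exact: ext_osum_sgn.
by apply: teq_osum_sgn; apply: ext_circ_sum => //; rewrite addnC.
Qed.

End ExtCohomology.

Theorem theorem4p1 (R : comPzRingType) (C : algType R)
    (Delta : C -> tens C) (eps : C -> R) :
  is_bialgebra Delta eps ->
  [/\
   (forall (n : nat) (x y : tens C), twf n x -> twf n y -> teq n x y ->
      heq n (ext Delta eps n x) (ext Delta eps n y)) /\
   (forall (n : nat) (x : tens C), twf n x -> thom n (ext Delta eps n x)),
   (forall (n : nat) (x : tens C), OC_cocycle Delta eps n x ->
      CE_cocycle Delta n (ext Delta eps n x)) /\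
   (forall (n : nat) (y : tens C), twf n y ->
      CE_cobound Delta n.+1 (ext Delta eps n.+1 (odiff (OC_op Delta eps) n y))),
   (forall (n : nat) (x : tens C), OC_cocycle Delta eps n x ->
      CE_cobound Delta n (ext Delta eps n x) -> OC_cobound Delta eps n x),
   heq 0 (ext Delta eps 0 (@OC_e R C)) (CE_e eps) /\
   (forall (m n : nat) (x y : tens C),
      OC_cocycle Delta eps m x -> OC_cocycle Delta eps n y ->
      CE_cobound Delta (m + n)
        (oadd (CE_op Delta)
           (ext Delta eps (m + n) (ocup (OC_op Delta eps) m x y))
           (oneg (CE_op Delta)
              (ocup (CE_op Delta) m (ext Delta eps m x) (ext Delta eps n y))))) &
   (forall (m n : nat) (x y : tens C),
      OC_cocycle Delta eps m x -> OC_cocycle Delta eps n y ->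
      CE_cobound Delta (m + n).-1
        (oadd (CE_op Delta)
           (ext Delta eps (m + n).-1 (obracket (OC_op Delta eps) m n x y))
           (oneg (CE_op Delta)
              (obracket (CE_op Delta) m n (ext Delta eps m x) (ext Delta eps n y)))))].
Proof.
move=> bialg; split.
- by split=> [n x y _ _ /ext_teq|n x /(ext_thom bialg)].
- split=> [n x [wf_x dx0]|n y wf_y].
    split=> [|c]; first exact: ext_thom.
    apply: teq_trans (teq_sym (ext_odiff bialg wf_x c)) _.
    exact: ext_teq dx0 c.
  by exists (ext Delta eps n y); split; [exact: ext_thom | exact: ext_odiff].
- move=> [|k] x [wf_x _] /=.
    by move=> ext_x0; apply: teq_trans (teq_sym (ext_at1 bialg wf_x)) (ext_x0 1).
  move=> [g [hom_g ext_dg]]; exists (g 1); split; first exact: thom_wf hom_g.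
  apply: teq_trans (teq_sym (ext_at1 bialg wf_x)) _.
  exact: teq_trans (ext_dg 1) (odiff_at1 bialg hom_g).
- split=> [c M phi _|m n x y [wf_x _] [wf_y _]].
    by rewrite /ext /= !teval_seq1 mul1r.
  by apply: CE_cobound_heq; apply: ext_cup.
by move=> m n x y [wf_x _] [wf_y _]; apply: CE_cobound_heq; apply: ext_bracket.
Qed.
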